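(* Let $\rho:\mathbb{R}\to\mathbb{R}$ be differentiable, applied element-wise to vectors. Let $D=\{u\in\mathbb{R}:\rho'(u)\neq 0\}$ and define $\varsigma:D\to\mathbb{R}$, $\varsigma(u)=u/\rho'(u)$ (applied element-wise to vectors, i.e. $\varsigma(\vec{s})=\vec{s}\oslash\rho'(\vec{s})$ with $\oslash$ the Hadamard division), and assume $\varsigma$ is a bijection from $D$ onto $\mathbb{R}$; set $\rho_\varsigma:=\rho\circ\varsigma^{-1}:\mathbb{R}\to\mathbb{R}$. Let $\vec{W}\in\mathbb{R}^{N\times N}$, $\vec{b}\in\mathbb{R}^N$, $\vec{U}\in\mathbb{R}^{N\times d}$ be such that the CHN defined by these data is well-behaved, and let $\vec{x}\in\mathbb{R}^d$ be an input all of whose entries lie in $D$. Let $\vec{s}^*\in\mathbb{R}^N$ be the equilibrium of the CHN, i.e. the unique solution of $\vec{s}^*=\rho'(\vec{s}^* )\odot(\vec{W}\rho(\vec{s}^* )+\vec{b}+\vec{U}\rho(\vec{x}))$. Then all entries of $\vec{s}^*$ lie in $D$, and $\vec{s}^*_\varsigma:=\varsigma(\vec{s}^* )$ satisfies the HAM equilibrium equation with non-linearity $\rho_\varsigma$ and preprocessed input $\varsigma(\vec{x})$: $\vec{s}^*_\varsigma=\vec{W}\rho_\varsigma(\vec{s}^*_\varsigma)+\vec{b}+\vec{U}\rho_\varsigma(\varsigma(\vec{x}))$; conversely, $\vec{s}^*=\varsigma^{-1}(\vec{s}^*_\varsigma)$.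
   Context: A CHN (continuous Hopfield network) with element-wise non-linearity $\rho$ and parameters $\vec{W},\vec{b},\vec{U}$ assigns to an input $\vec{x}\in\mathbb{R}^d$ its equilibrium state(s), the solutions $\vec{s}^*\in\mathbb{R}^N$ of $\vec{s}^*=\rho'(\vec{s}^* )\odot(\vec{W}\rho(\vec{s}^* )+\vec{b}+\vec{U}\rho(\vec{x}))$, where $\odot$ is the Hadamard product. The CHN is called well-behaved if for every input $\vec{x}$ this equation has exactly one solution $\vec{s}^*$ and this solution is not identically zero. A HAM with non-linearity $\sigma$ has equilibrium equation $\vec{s}^*=\vec{W}\sigma(\vec{s}^* )+\vec{b}+\vec{U}\sigma(\vec{x})$. *)

From HB Require Import structures.
From mathcomp Require Import all_boot all_order all_algebra.
From mathcomp Require Import all_classical all_reals all_analysis.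
Set Implicit Arguments. Unset Strict Implicit. Unset Printing Implicit Defensive.
Import Order.TTheory GRing.Theory Num.Theory.
Local Open Scope ring_scope.

Section Defs.
Variable R : realType.

Definition Dset (rho : R -> R) : set R := [set u | (derive1 rho) u != 0].

Definition varsigma (rho : R -> R) (u : R) : R := u / (derive1 rho) u.

Definition chn_equilibrium (N d : nat) (rho : R -> R) (W : 'M[R]_N) (b : 'cV[R]_N)
  (U : 'M[R]_(N, d)) (x : 'cV[R]_d) (s : 'cV[R]_N) : Prop :=
  s = map2_mx (fun a c => a * c) (map_mx (derive1 rho) s)
        (W *m map_mx rho s + b + U *m map_mx rho x).

Definition chn_well_behaved (N d : nat) (rho : R -> R) (W : 'M[R]_N) (b : 'cV[R]_N)
  (U : 'M[R]_(N, d)) : Prop :=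
  forall x : 'cV[R]_d,
    (exists! s : 'cV[R]_N, chn_equilibrium rho W b U x s) /\
    (forall s, chn_equilibrium rho W b U x s -> s <> 0).

Definition ham_equilibrium (N d : nat) (sigma : R -> R) (W : 'M[R]_N) (b : 'cV[R]_N)
  (U : 'M[R]_(N, d)) (x : 'cV[R]_d) (s : 'cV[R]_N) : Prop :=
  s = W *m map_mx sigma s + b + U *m map_mx sigma x.

End Defs.

From HB Require Import structures.
From mathcomp Require Import all_boot all_order all_algebra.
From mathcomp Require Import all_classical all_reals all_analysis.
Import Order.TTheory GRing.Theory Num.Theory.
Local Open Scope ring_scope.
Local Open Scope classical_set_scope.

(* Entrywise, a CHN equilibrium reads s_i = rho'(s_i) h_i with h the HAM
   right-hand side W rho(s) + b + U rho(x).  If rho'(s_i) = 0 this forces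
   s_i = 0, and 0 lies in D because varsigma vanishes only at 0 and is onto;
   so every s_i lies in D, where dividing by rho'(s_i) gives varsigma(s_i) = h_i.
   Since varsigma^-1 undoes varsigma on D, rho_varsigma(varsigma s) = rho s,
   which turns h into the HAM right-hand side at varsigma s. *)

Section Varsigma.
Context {R : realType} {rho : R -> R}.

Lemma mem_Dset u : (u \in Dset rho) = (derive1 rho u != 0).
Proof. by apply/idP/idP; rewrite inE. Qed.

Lemma varsigma_eq0 u : u \in Dset rho -> (varsigma rho u == 0) = (u == 0).
Proof. by rewrite mem_Dset /varsigma mulf_eq0 invr_eq0 => /negPf->; rewrite orbF. Qed.

Lemma Dset0 : (exists2 u, u \in Dset rho & varsigma rho u = 0) -> 0 \in Dset rho.
Proof. by case=> u uD /eqP; rewrite varsigma_eq0 // => /eqP <-. Qed.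

Lemma fixpoint_mem_Dset u h :
  0 \in Dset rho -> u = derive1 rho u * h -> u \in Dset rho.
Proof.
move=> D0 uE; rewrite mem_Dset; apply/negP => /eqP rho'u0.
by move: D0; rewrite -[0](mul0r h) -rho'u0 -uE mem_Dset rho'u0 eqxx.
Qed.

Lemma varsigma_fixpoint u h :
  u \in Dset rho -> u = derive1 rho u * h -> varsigma rho u = h.
Proof. by rewrite mem_Dset /varsigma => rho'u uE; rewrite {1}uE mulrAC divff ?mul1r. Qed.

Lemma varsigma_invK {varsigma_inv : R -> R} :
  {in Dset rho &, injective (varsigma rho)} ->
  (forall y, varsigma_inv y \in Dset rho /\ varsigma rho (varsigma_inv y) = y) ->
  {in Dset rho, cancel (varsigma rho) varsigma_inv}.
Proof. by move=> inj inv u uD; have [vD vK] := inv (varsigma rho u); exact: inj. Qed.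

End Varsigma.

Lemma map_cV_can_in {T : Type} {P : {pred T}} {f g : T -> T} {n} {v : 'cV[T]_n} :
  {in P, cancel f g} -> (forall i, v i ord0 \in P) -> map_mx g (map_mx f v) = v.
Proof.
by move=> fK vP; rewrite -map_mx_comp map_mx_id_in // => i j; rewrite (ord1 j) /= fK.
Qed.

Section CHN.
Context {R : realType} {N d : nat} {rho : R -> R}.
Context {W : 'M[R]_N} {b : 'cV[R]_N} {U : 'M[R]_(N, d)} {x : 'cV[R]_d}.

Lemma chn_equilibriumE {s : 'cV[R]_N} : chn_equilibrium rho W b U x s ->
  forall i, s i ord0 =
    derive1 rho (s i ord0) * (W *m map_mx rho s + b + U *m map_mx rho x) i ord0.
Proof. by move=> sE i; rewrite [in LHS]sE !mxE. Qed.

Lemma chn_equilibrium_mem_Dset {s : 'cV[R]_N} : 0 \in Dset rho ->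
  chn_equilibrium rho W b U x s -> forall i, s i ord0 \in Dset rho.
Proof. by move=> D0 /chn_equilibriumE sE i; exact: fixpoint_mem_Dset (sE i). Qed.

Lemma chn_equilibrium_varsigma {s : 'cV[R]_N} : (forall i, s i ord0 \in Dset rho) ->
  chn_equilibrium rho W b U x s ->
  map_mx (varsigma rho) s = W *m map_mx rho s + b + U *m map_mx rho x.
Proof.
move=> sD /chn_equilibriumE sE; apply/matrixP => i j.
by rewrite (ord1 j) mxE; exact: varsigma_fixpoint (sE i).
Qed.

Lemma chn_to_ham_equilibrium {varsigma_inv : R -> R} {s : 'cV[R]_N} :
  {in Dset rho, cancel (varsigma rho) varsigma_inv} ->
  (forall i, x i ord0 \in Dset rho) -> (forall i, s i ord0 \in Dset rho) ->
  chn_equilibrium rho W b U x s ->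
  ham_equilibrium (rho \o varsigma_inv) W b U (map_mx (varsigma rho) x)
    (map_mx (varsigma rho) s).
Proof.
move=> invK xD sD sE; rewrite /ham_equilibrium.
have rho_varsigmaK n (v : 'cV[R]_n) : (forall i, v i ord0 \in Dset rho) ->
    map_mx (rho \o varsigma_inv) (map_mx (varsigma rho) v) = map_mx rho v.
  by move=> vD; rewrite map_mx_comp (map_cV_can_in invK).
by rewrite !rho_varsigmaK //; exact: chn_equilibrium_varsigma.
Qed.

End CHN.

Theorem theorem2 (R : realType) (N d : nat) (rho : R -> R)
  (varsigma_inv : R -> R)
  (W : 'M[R]_N) (b : 'cV[R]_N) (U : 'M[R]_(N, d)) (x : 'cV[R]_d) (s : 'cV[R]_N) :
  (forall u : R, derivable rho u 1) ->
  (* varsigma is a bijection from D onto R ... *)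
  {in Dset rho &, injective (varsigma rho)} ->
  (forall y : R, exists2 u, u \in Dset rho & varsigma rho u = y) ->
  (* ... and varsigma_inv is its inverse R -> D *)
  (forall y : R, varsigma_inv y \in Dset rho /\ varsigma rho (varsigma_inv y) = y) ->
  chn_well_behaved rho W b U ->
  (forall i, x i ord0 \in Dset rho) ->
  chn_equilibrium rho W b U x s ->
  let s_vs := map_mx (varsigma rho) s in
  (forall i, s i ord0 \in Dset rho) /\
  ham_equilibrium (rho \o varsigma_inv) W b U (map_mx (varsigma rho) x) s_vs /\
  s = map_mx varsigma_inv s_vs.
Proof.
move=> _ inj surj inv _ xD sE s_vs.
have invK := varsigma_invK inj inv.
have sD := chn_equilibrium_mem_Dset (Dset0 (surj 0)) sE.
split; [done | split; first exact: chn_to_ham_equilibrium].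
by rewrite (map_cV_can_in invK).
Qed.
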